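(* The class $\mathbf{RMM}$ is not closed under homomorphisms: there exist a finite alphabet $\Sigma$, a language $L\in\mathbf{RMM}$ over $\Sigma$, and a monoid homomorphism $h:\Sigma^*\to\Sigma^*$ such that $h(L)\notin\mathbf{RMM}$.
   Context: A measure-many quantum finite automaton (MM-QFA) over a finite alphabet $\Sigma$ is a tuple $M=(Q,\Sigma,\{U_\sigma\}_{\sigma\in\Sigma\cup\{\$\}},q_0,Q_{acc},Q_{rej})$, where $Q$ is a finite set of states indexing an orthonormal basis of $\mathbb{C}^Q$, $\$\notin\Sigma$ is an end-marker, each $U_\sigma$ is unitary, $q_0$ is the initial state, and $Q$ is partitioned into $Q_{acc}$, $Q_{rej}$ and non-halting states $Q_{non}$, with orthogonal projections $P_{acc},P_{rej},P_{non}$ onto the corresponding spans. On input $x\in\Sigma^*$ it processes the symbols of $x\$$, maintaining $(\psi,p_{acc},p_{rej})$ initialised to $(|q_0\rangle,0,0)$: on reading $\sigma$, $\psi'=U_\sigma\psi$, $p_{acc}\mathrel{+}=\|P_{acc}\psi'\|^2$, $p_{rej}\mathrel{+}=\|P_{rej}\psi'\|^2$, $\psi\leftarrow P_{non}\psi'$. The acceptance probability $p_M(x)$ is the final $p_{acc}$. $M$ accepts $L$ with bounded error if for some $\lambda$ and $\epsilon>0$, $p_M(x)>\lambda+\epsilon$ for $x\in L$ and $p_M(x)<\lambda-\epsilon$ for $x\notin L$. $\mathbf{RMM}$ is the class of languages accepted by some MM-QFA with bounded error. *)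

From HB Require Import structures.
From mathcomp Require Import all_boot all_order all_algebra.
From mathcomp Require Import complex.
From mathcomp Require Import Rstruct.
From Stdlib Require Import Rdefinitions.
Set Implicit Arguments. Unset Printing Implicit Defensive.
Import Order.TTheory GRing.Theory Num.Theory.
Local Open Scope ring_scope.

Notation RR := Rdefinitions.R.
Notation CC := (complex Rdefinitions.R).

Inductive qkind := Qacc | Qrej | Qnon.
Definition qkind_eqb (a b : qkind) : bool :=
  match a, b with
  | Qacc, Qacc | Qrej, Qrej | Qnon, Qnon => true | _, _ => false end.

(* A measure-many QFA over alphabet S with state set 'I_n.
   Input symbols are [option S]: [Some s] is the letter s, [None] is the
   end-marker $. *)
Record mmqfa (S : finType) := MMQFA {
  mm_n : nat;
  mm_U : option S -> 'M[CC]_mm_n;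
  mm_q0 : 'I_mm_n;
  mm_kind : 'I_mm_n -> qkind }.

Definition adjmx n (A : 'M[CC]_n) : 'M[CC]_n := (map_mx (@conjc _) A)^T.
Definition unitary_mx n (A : 'M[CC]_n) : Prop := A *m adjmx A = 1%:M.

Definition mm_wf (S : finType) (M : mmqfa S) : Prop :=
  forall s : option S, unitary_mx (@mm_U S M s).

Definition proj_kind (S : finType) (M : mmqfa S) (k : qkind)
  (v : 'cV[CC]_(mm_n M)) : 'cV[CC]_(mm_n M) :=
  \col_i (if qkind_eqb (@mm_kind S M i) k then v i 0 else 0).

Definition normsq n (v : 'cV[CC]_n) : RR :=
  \sum_i ((@complex.Re RR (v i 0)) ^+ 2 + (@complex.Im RR (v i 0)) ^+ 2).

Definition mm_step (S : finType) (M : mmqfa S)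
  (st : 'cV[CC]_(mm_n M) * RR * RR) (s : option S) :=
  let: (psi, pacc, prej) := st in
  let psi' := @mm_U S M s *m psi in
  (proj_kind M Qnon psi', pacc + normsq (proj_kind M Qacc psi'),
   prej + normsq (proj_kind M Qrej psi')).

Definition init_vec n (q : 'I_n) : 'cV[CC]_n := \col_i (if i == q then 1 else 0).

Definition accept_prob (S : finType) (M : mmqfa S) (x : seq S) : RR :=
  (foldl (@mm_step S M) (init_vec (@mm_q0 S M), 0, 0)
     (rcons (map Some x) None)).1.2.

Definition language (S : finType) := seq S -> Prop.

Definition accepts_bounded (S : finType) (M : mmqfa S) (L : language S) : Prop :=
  exists (lam eps : RR), 0 < eps /\
    forall x : seq S,
      (L x -> lam + eps < accept_prob M x) /\
      (~ L x -> accept_prob M x < lam - eps).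

Definition RMM (S : finType) (L : language S) : Prop :=
  exists M : mmqfa S, mm_wf M /\ accepts_bounded M L.

Definition monoid_hom (S : finType) (h : seq S -> seq S) : Prop :=
  h [::] = [::] /\ forall u v, h (u ++ v) = h u ++ h v.

Definition lang_image (S : finType) (h : seq S -> seq S) (L : language S)
  : language S := fun y => exists2 x, L x & y = h x.

From Stdlib Require Import Classical.
From mathcomp Require Import all_boot all_order all_fingroup all_algebra complex Rstruct.
From mathcomp.algebra_tactics Require Import ring lra.
Set Implicit Arguments. Unset Strict Implicit. Unset Printing Implicit Defensive.
Import Order.TTheory GRing.Theory Num.Theory.
Local Open Scope ring_scope.

(* Take L = {a,b}^* c and the homomorphism h fixing a, b and sending c to a, so
   that h(L) = {a,b}^* a; L is accepted with certainty by a four-state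
   permutation automaton.  Suppose an MM-QFA M accepted {a,b}^* a with margin
   eps.  The non-halting mass |psi(w)|^2 only decreases along extensions, so
   some w in {a,b}^* is del-almost minimal: no extension inside {a,b}^* loses
   more than del of it.  Past w the machine is then almost unitary and
   non-halting: reading b^k from psi(wa) stays within 4^k del of U_b^k psi(wa)
   and collects at most del of acceptance.  By compactness of the unit ball,
   U_b^d psi(wa) returns eta-close to psi(wa) for some 0 < d <= K, with K
   independent of the starting vector.  Taking del small against 4^K, the words
   wa in h(L) and wab^d outside h(L) get acceptance probabilities closer than
   the margin allows. *)

Local Notation RE := (@complex.Re RR).
Local Notation IM := (@complex.Im RR).

Lemma ReD (z w : CC) : RE (z + w) = RE z + RE w.
Proof. exact: (raddfD (RE : Rcomplex RR -> RR)). Qed.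
Lemma ImD (z w : CC) : IM (z + w) = IM z + IM w.
Proof. exact: (raddfD (IM : Rcomplex RR -> RR)). Qed.
Lemma ReN (z : CC) : RE (- z) = - RE z.
Proof. exact: (raddfN (RE : Rcomplex RR -> RR)). Qed.
Lemma ImN (z : CC) : IM (- z) = - IM z.
Proof. exact: (raddfN (IM : Rcomplex RR -> RR)). Qed.

Lemma sqrD_le (R : realFieldType) (t a c : R) : 0 < t ->
  (a + c) ^+ 2 <= (1 + t) * a ^+ 2 + (1 + t^-1) * c ^+ 2.
Proof.
move=> t_gt0.
have tV : t * t^-1 = 1 by rewrite mulfV // gt_eqF.
have : 0 <= t^-1 * (t * a - c) ^+ 2 by rewrite mulr_ge0 ?sqr_ge0 // invr_ge0 ltW.
have -> : t^-1 * (t * a - c) ^+ 2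
        = t * (t * t^-1) * a ^+ 2 - 2 * (t * t^-1) * a * c + t^-1 * c ^+ 2 by ring.
rewrite tV; nra.
Qed.

Section ColumnVectors.
Variable n : nat.
Implicit Types u v : 'cV[CC]_n.

Lemma normsq_ge0 v : 0 <= normsq v.
Proof. by apply: sumr_ge0 => i _; rewrite addr_ge0 ?sqr_ge0. Qed.

Lemma normsq0 : normsq (0 : 'cV[CC]_n) = 0.
Proof. by apply: big1 => i _; rewrite mxE expr0n /= addr0. Qed.

Lemma normsq_init_vec (q : 'I_n) : normsq (init_vec q) = 1.
Proof.
rewrite /normsq (bigD1 q) //= big1 => [|i /negbTE iq].
  by rewrite !mxE eqxx expr1n expr0n /= !addr0.
by rewrite !mxE iq expr0n /= addr0.
Qed.

Lemma normsq_coord_le v i : RE (v i 0) ^+ 2 + IM (v i 0) ^+ 2 <= normsq v.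
Proof.
by rewrite /normsq (bigD1 i) //= lerDl; apply: sumr_ge0 => j _; rewrite addr_ge0 ?sqr_ge0.
Qed.

Lemma normsqN v : normsq (- v) = normsq v.
Proof. by apply: eq_bigr => i _; rewrite !mxE ReN ImN !sqrrN. Qed.

Lemma normsqBC u v : normsq (u - v) = normsq (v - u).
Proof. by rewrite -normsqN opprB. Qed.

Lemma normsqD_le (t : RR) u v : 0 < t ->
  normsq (u + v) <= (1 + t) * normsq u + (1 + t^-1) * normsq v.
Proof.
move=> t_gt0; rewrite /normsq !mulr_sumr -big_split /=.
apply: ler_sum => i _; rewrite !mxE ReD ImD.
have := sqrD_le (RE (u i 0)) (RE (v i 0)) t_gt0.
have := sqrD_le (IM (u i 0)) (IM (v i 0)) t_gt0.
lra.
Qed.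

Lemma normsq_adj v : normsq v = RE (((map_mx (@conjc _) v)^T *m v) 0 0).
Proof.
rewrite mxE /normsq; elim/big_rec2: _ => [//|i r _ _ ->].
rewrite !mxE ReD; congr (_ + _).
by case: (v i 0) => x y; rewrite /GRing.mul /=; ring.
Qed.

Lemma unitary_normsq (A : 'M[CC]_n) v : unitary_mx A -> normsq (A *m v) = normsq v.
Proof.
move=> /mulmx1C AA1; rewrite !normsq_adj map_mxM trmx_mul.
by rewrite -mulmxA [X in _ *m X]mulmxA -/(adjmx _) AA1 mul1mx.
Qed.

Lemma unitary_iter_normsq (A : 'M[CC]_n) k v :
  unitary_mx A -> normsq (iter k (mulmx A) v) = normsq v.
Proof. by move=> uA; elim: k => //= k <-; rewrite unitary_normsq. Qed.

Lemma iter_mulmxB (A : 'M[CC]_n) k u v :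
  iter k (mulmx A) (u - v) = iter k (mulmx A) u - iter k (mulmx A) v.
Proof. by elim: k => //= k ->; rewrite mulmxBr. Qed.

Lemma perm_mx_unitary (s : {perm 'I_n}) : unitary_mx (perm_mx s : 'M[CC]_n).
Proof.
rewrite /unitary_mx /adjmx (map_perm_mx (@conjc RR)) tr_perm_mx -perm_mxM.
by rewrite mulgV perm_mx1.
Qed.

Lemma perm_mxV_init_vec (s : {perm 'I_n}) (q : 'I_n) :
  (perm_mx s^-1 : 'M[CC]_n) *m init_vec q = init_vec (s q).
Proof.
rewrite -row_permE; apply/matrixP => i j; rewrite !mxE.
by congr (if _ then _ else _); apply/eqP/eqP => [<-|->]; rewrite ?permKV ?permK.
Qed.

End ColumnVectors.

Section Projections.
Variables (S : finType) (M : mmqfa S).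
Local Notation P := (proj_kind M).
Implicit Types v w : 'cV[CC]_(mm_n M).

Lemma proj_kindD k v w : P k (v + w) = P k v + P k w.
Proof. by apply/matrixP => i j; rewrite !mxE; case: ifP; rewrite ?addr0. Qed.

Lemma proj_kind0 k : P k 0 = 0.
Proof. by apply/matrixP => i j; rewrite !mxE; case: ifP. Qed.

Lemma proj_kind_init_vec k q :
  P k (init_vec q) = if qkind_eqb (mm_kind M q) k then init_vec q else 0.
Proof.
apply/matrixP => i j; rewrite !mxE.
case: (eqVneq i q) => [->|iq]; first by case: ifP; rewrite !mxE ?eqxx.
by do 2 case: ifP => _; rewrite !mxE ?(negbTE iq).
Qed.

Lemma normsq_proj_kind_le k v : normsq (P k v) <= normsq v.
Proof.
apply: ler_sum => i _; rewrite !mxE; case: ifP => _ //.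
by rewrite expr0n /= addr0 addr_ge0 ?sqr_ge0.
Qed.

Lemma normsq_proj_kinds v :
  normsq v = normsq (P Qnon v) + normsq (P Qacc v) + normsq (P Qrej v).
Proof.
rewrite /normsq -!big_split; apply: eq_bigr => i _; rewrite !mxE.
by case: (mm_kind M i); rewrite /= expr0n /= ?addr0 ?add0r.
Qed.

Lemma normsq_proj_non_compl v : normsq v = normsq (P Qnon v) + normsq (v - P Qnon v).
Proof.
rewrite /normsq -!big_split; apply: eq_bigr => i _; rewrite !mxE.
by case: (mm_kind M i); rewrite /= ?subr0 ?subrr expr0n /= ?addr0 ?add0r.
Qed.

Lemma mm_step_init_vec q q' s pa pr : mm_U M s *m init_vec q = init_vec q' ->
  mm_step M (init_vec q, pa, pr) s =
  match mm_kind M q' with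
  | Qnon => (init_vec q', pa, pr)
  | Qacc => (0, pa + 1, pr)
  | Qrej => (0, pa, pr + 1)
  end.
Proof.
move=> Uq; rewrite /mm_step Uq !proj_kind_init_vec.
by case: (mm_kind M q'); rewrite /= ?normsq_init_vec ?normsq0 ?addr0.
Qed.

Lemma mm_step0 s pa pr : mm_step M (0, pa, pr) s = (0, pa, pr).
Proof. by rewrite /mm_step mulmx0 !proj_kind0 normsq0 !addr0. Qed.

End Projections.

Section Runs.
Variables (S : finType) (M : mmqfa S).
Hypothesis wfM : mm_wf M.
Local Notation P := (proj_kind M).
Local Notation U := (mm_U M).
Local Notation config := ('cV[CC]_(mm_n M) * RR * RR)%type.

Definition mm_config (x : seq S) : config :=
  foldl (mm_step M) (init_vec (mm_q0 M), 0, 0) (map Some x).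

Local Notation psi x := (mm_config x).1.1.
Local Notation acc x := (mm_config x).1.2.
Local Notation rej x := (mm_config x).2.

Definition mm_mass (c : config) : RR := c.1.2 + c.2 + normsq c.1.1.

Lemma accept_probE x : accept_prob M x = acc x + normsq (P Qacc (U None *m psi x)).
Proof. by rewrite /accept_prob foldl_rcons -/(mm_config x); case: mm_config => [[]]. Qed.

Lemma mm_config_cat x y : mm_config (x ++ y) = foldl (mm_step M) (mm_config x) (map Some y).
Proof. by rewrite /mm_config map_cat foldl_cat. Qed.

Lemma mm_config_rcons x s : mm_config (rcons x s) = mm_step M (mm_config x) (Some s).
Proof. by rewrite -cats1 mm_config_cat. Qed.

Lemma psi_rcons x s : psi (rcons x s) = P Qnon (U (Some s) *m psi x).
Proof. by rewrite mm_config_rcons; case: mm_config => [[]]. Qed.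

Lemma mm_step_mass c s : [/\ mm_mass (mm_step M c s) = mm_mass c,
  c.1.2 <= (mm_step M c s).1.2 & c.2 <= (mm_step M c s).2].
Proof.
case: c => [[v pa] pr]; rewrite /mm_mass /=.
have := normsq_proj_kinds (U s *m v); rewrite unitary_normsq // => split_v.
have := normsq_ge0 (P Qacc (U s *m v)); have := normsq_ge0 (P Qrej (U s *m v)).
by split; lra.
Qed.

Lemma foldl_mm_step_mass c ss : [/\ mm_mass (foldl (mm_step M) c ss) = mm_mass c,
  c.1.2 <= (foldl (mm_step M) c ss).1.2 & c.2 <= (foldl (mm_step M) c ss).2].
Proof.
elim: ss c => [|s ss IH] c /=; first by split.
have [m1 a1 r1] := mm_step_mass c s; have [m2 a2 r2] := IH (mm_step M c s).
by split; [rewrite m2 | exact: le_trans a2 | exact: le_trans r2].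
Qed.

Lemma mm_mass_config x : mm_mass (mm_config x) = 1.
Proof.
have [-> _ _] := foldl_mm_step_mass (init_vec (mm_q0 M), 0, 0) (map Some x).
by rewrite /mm_mass /= normsq_init_vec !add0r.
Qed.

Lemma acc_ge0 x : 0 <= acc x.
Proof. by have [] := foldl_mm_step_mass (init_vec (mm_q0 M), 0, 0) (map Some x). Qed.

Lemma rej_ge0 x : 0 <= rej x.
Proof. by have [] := foldl_mm_step_mass (init_vec (mm_q0 M), 0, 0) (map Some x). Qed.

Lemma normsq_psi_le1 x : normsq (psi x) <= 1.
Proof.
by have := mm_mass_config x; have := acc_ge0 x; have := rej_ge0 x; rewrite /mm_mass; lra.
Qed.

Lemma acc_cat x y : acc x <= acc (x ++ y) <= acc x + normsq (psi x) - normsq (psi (x ++ y)).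
Proof.
have [m a r] := foldl_mm_step_mass (mm_config x) (map Some y).
rewrite -mm_config_cat in m a r; move: m; rewrite /mm_mass => m.
apply/andP; split=> //; lra.
Qed.

Lemma normsq_psi_cat x y : normsq (psi (x ++ y)) <= normsq (psi x).
Proof. by have /andP[] := acc_cat x y; lra. Qed.

Lemma accept_prob_le x x' (t : RR) : 0 < t ->
  accept_prob M x <= accept_prob M x' + (acc x - acc x') + t
                     + (1 + t^-1) * normsq (psi x - psi x').
Proof.
move=> t_gt0; rewrite !accept_probE.
have -> : P Qacc (U None *m psi x) =
          P Qacc (U None *m psi x') + P Qacc (U None *m (psi x - psi x')).
  by rewrite -proj_kindD -mulmxDr addrC subrK.
have proj_le v : normsq (P Qacc (U None *m v)) <= normsq v.
  by apply: le_trans (normsq_proj_kind_le _ _) _; rewrite unitary_normsq.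
have := normsqD_le (P Qacc (U None *m psi x')) (P Qacc (U None *m (psi x - psi x'))) t_gt0.
have := proj_le (psi x - psi x'); have := le_trans (proj_le _) (normsq_psi_le1 x').
have := normsq_ge0 (P Qacc (U None *m psi x')).
have : 0 < t^-1 by rewrite invr_gt0.
nra.
Qed.

End Runs.

Lemma truncn_close (R : archiRealFieldType) (m : nat) (r r' : R) :
  (0 < m)%N -> r ^+ 2 <= 1 -> r' ^+ 2 <= 1 ->
  Num.truncn ((r + 1) * m%:R) = Num.truncn ((r' + 1) * m%:R) ->
  (r - r') ^+ 2 * m%:R <= 1.
Proof.
move=> m_gt0 r1 r'1 same_cell.
have m1 : 1 <= (m%:R : R) by rewrite ler1n.
have /truncn_itv : 0 <= (r + 1) * m%:R by apply: mulr_ge0; nra.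
have /truncn_itv : 0 <= (r' + 1) * m%:R by apply: mulr_ge0; nra.
rewrite same_cell -natr1 => /andP[lo' hi'] /andP[lo hi].
have : ((r - r') * m%:R) ^+ 2 < 1 by nra.
nra.
Qed.

Lemma grid_cells n (eta : RR) : 0 < eta ->
  exists (T : finType) (cell : 'cV[CC]_n -> T), forall u v,
    normsq u <= 1 -> normsq v <= 1 -> cell u = cell v -> normsq (u - v) < eta.
Proof.
move=> eta_gt0.
(* Each of the 2n real coordinates, which lie in [-1, 1], is cut into intervals
   of length 1/m, where m > 2n/eta. *)
pose m := (Num.truncn (2 * n%:R / eta)).+1.
have m_gt0 : (0 < m)%N by [].
have m_big : 2 * n%:R < m%:R * eta.
  by rewrite -ltr_pdivrMr //; exact: truncnS_gt.
pose coord (v : 'cV[CC]_n) (p : 'I_n * bool) := if p.2 then RE (v p.1 0) else IM (v p.1 0).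
have coord_sq v p : normsq v <= 1 -> coord v p ^+ 2 <= 1.
  move=> v1; have := normsq_coord_le v p.1; rewrite /coord.
  by have := sqr_ge0 (RE (v p.1 0)); have := sqr_ge0 (IM (v p.1 0)); case: p.2; lra.
have coord_cell_lt v p : normsq v <= 1 -> (Num.truncn ((coord v p + 1) * m%:R) < (2 * m).+1)%N.
  move=> /(coord_sq _ p) cp1.
  have m_ge0 : 0 <= (m%:R : RR) := ler0n _ _.
  rewrite truncn_lt_nat; last by apply: mulr_ge0 => //; nra.
  by rewrite -addn1 natrD natrM; nra.
exists {ffun 'I_n * bool -> 'I_(2 * m).+1}.
exists (fun v => [ffun p => inord (Num.truncn ((coord v p + 1) * m%:R))]).
move=> u v u1 v1 same_cell.
have close p : (coord u p - coord v p) ^+ 2 * m%:R <= 1.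
  apply: truncn_close; rewrite ?coord_sq //.
  have /ffunP/(_ p) := same_cell; rewrite !ffunE => /(congr1 (@nat_of_ord _)).
  by rewrite !inordK //; exact: coord_cell_lt.
have : normsq (u - v) * m%:R <= n%:R * 2.
  rewrite [n%:R * 2](_ : _ = \sum_(k < n) (2 : RR)); last by rewrite sumr_const card_ord mulr_natl.
  rewrite /normsq mulr_suml; apply: ler_sum => k _.
  rewrite !mxE ReD ImD ReN ImN.
  have := close (k, true); have := close (k, false); rewrite /coord /=.
  lra.
have : 0 < (m%:R : RR) by rewrite ltr0n.
nra.
Qed.

Lemma pigeonhole_nat (T : finType) (f : nat -> T) :
  exists i j, (i < j <= #|T|)%N /\ f i = f j.
Proof.
have /injectivePn[i [j ij fij]] : ~~ injectiveb (fun i : 'I_#|T|.+1 => f i).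
  by apply/injectiveP => /leq_card; rewrite card_ord ltnn.
have [lt | gt | eq] := ltngtP i j.
- by exists i, j; rewrite lt -ltnS ltn_ord.
- by exists j, i; rewrite gt -ltnS ltn_ord.
- by rewrite (val_inj eq) eqxx in ij.
Qed.

Lemma unitary_recurrence n (A : 'M[CC]_n) (eta : RR) : unitary_mx A -> 0 < eta ->
  exists K, forall u, normsq u <= 1 ->
    exists2 d, (0 < d <= K)%N & normsq (u - iter d (mulmx A) u) < eta.
Proof.
move=> uA eta_gt0; have [T [cell cellP]] := grid_cells n eta_gt0.
exists #|T| => u u1.
have [i [j [/andP[ij jK] same_cell]]] := pigeonhole_nat (fun k => cell (iter k (mulmx A) u)).
have orbit1 k : normsq (iter k (mulmx A) u) <= 1 by rewrite unitary_iter_normsq.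
have := cellP _ _ (orbit1 i) (orbit1 j) same_cell.
pose d := (j - i)%N; have -> : j = (i + d)%N by rewrite subnKC // ltnW.
rewrite iterD -iter_mulmxB unitary_iter_normsq // => close.
by exists d; rewrite // subn_gt0 ij (leq_trans (leq_subr _ _)).
Qed.

Lemma almost_minimal_extension (R : archiRealFieldType) (T : Type) (P : pred (seq T))
    (phi : seq T -> R) (del : R) :
  0 < del -> P [::] -> (forall u v, P u -> P v -> P (u ++ v)) -> (forall x, 0 <= phi x) ->
  exists2 w, P w & forall y, P y -> phi w - del <= phi (w ++ y).
Proof.
move=> del_gt0 P0 Pcat phi_ge0; apply: NNPP => no_min.
have descend w : P w -> exists2 y, P (w ++ y) & phi (w ++ y) < phi w - del.
  move=> Pw; apply: NNPP => no_y; apply: no_min; exists w => // y Py.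
  by rewrite leNgt; apply/negP => lt; apply: no_y; exists y; rewrite ?Pcat.
have deep k : exists2 w, P w & phi w <= phi [::] - k%:R * del.
  elim: k => [|k [w Pw hw]]; first by exists [::]; rewrite // mul0r subr0.
  have [y Pwy hy] := descend w Pw.
  by exists (w ++ y) => //; rewrite -natr1 mulrDl mul1r; lra.
have [w _ hw] := deep (Num.truncn (phi [::] / del)).+1.
have := truncnS_gt (phi [::] / del); rewrite ltr_pdivrMr // => big.
by have := phi_ge0 w; lra.
Qed.

Lemma unitary_drift n (A : 'M[CC]_n) (f : nat -> 'cV[CC]_n) (del : RR) :
  unitary_mx A -> (forall k, normsq (A *m f k - f k.+1) <= del) ->
  forall k, normsq (f k - iter k (mulmx A) (f 0%N)) <= 4 ^+ k * del.
Proof.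
move=> uA step; have del_ge0 : 0 <= del := le_trans (normsq_ge0 _) (step 0%N).
elim=> [|k IH]; first by rewrite subrr normsq0 mul1r.
have -> : f k.+1 - iter k.+1 (mulmx A) (f 0%N) =
          - (A *m f k - f k.+1) + A *m (f k - iter k (mulmx A) (f 0%N)).
  by rewrite iterS mulmxBr opprB addrA subrK.
apply: le_trans (normsqD_le _ _ ltr01) _.
rewrite invr1 normsqN unitary_normsq // exprS.
have : 1 <= 4 ^+ k :> RR by rewrite exprn_ege1 // ler1n.
by have := step k; nra.
Qed.

Section AlmostUnitaryTail.
Variables (S : finType) (M : mmqfa S).
Hypothesis wfM : mm_wf M.
Variables a b : S.
Local Notation W := (all (fun s => s \in [:: a; b])).
Local Notation Ub := (mm_U M (Some b)).
Local Notation psi x := (mm_config M x).1.1.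
Local Notation acc x := (mm_config M x).1.2.

Lemma over_ab_cat u v : W u -> W v -> W (u ++ v).
Proof. by rewrite all_cat => -> ->. Qed.

Lemma over_ab_tail k : W (a :: nseq k b).
Proof. by rewrite /= inE eqxx /= all_nseq !inE eqxx orbT orbT. Qed.

Section AlmostMinimal.
Variables (del : RR) (w : seq S).
Hypothesis w_min : forall y, W y -> normsq (psi w) - del <= normsq (psi (w ++ y)).

Lemma acc_almost_minimal y : W y -> acc w <= acc (w ++ y) <= acc w + del.
Proof. by move=> /w_min; have /andP[] := acc_cat wfM w y; lra. Qed.

Lemma halting_almost_minimal y s : W (rcons y s) ->
  normsq (mm_U M (Some s) *m psi (w ++ y) - psi (w ++ rcons y s)) <= del.
Proof.
move=> /w_min; rewrite -rcons_cat psi_rcons.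
have := normsq_proj_non_compl (mm_U M (Some s) *m psi (w ++ y)).
rewrite unitary_normsq // normsqBC.
by have := normsq_psi_cat wfM w y; lra.
Qed.

Lemma drift_almost_minimal k :
  normsq (psi (w ++ a :: nseq k b) - iter k (mulmx Ub) (psi (w ++ [:: a]))) <= 4 ^+ k * del.
Proof.
have step j : normsq (Ub *m psi (w ++ a :: nseq j b) - psi (w ++ a :: nseq j.+1 b)) <= del.
  rewrite -[j.+1]addn1 nseqD cats1 -rcons_cons; apply: halting_almost_minimal.
  by rewrite -cats1 over_ab_cat ?over_ab_tail //= !inE eqxx orbT.
exact: (unitary_drift (f := fun j => psi (w ++ a :: nseq j b)) (wfM (Some b)) step).
Qed.

End AlmostMinimal.

Lemma accept_prob_ab_indistinguishable (eps : RR) : 0 < eps ->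
  exists w d, [/\ W w, (0 < d)%N &
    accept_prob M (rcons w a) <= accept_prob M (w ++ a :: nseq d b) + eps].
Proof.
move=> eps_gt0.
pose t := eps / 3; pose c := 1 + t^-1; pose eta := eps / (6 * c).
have t_gt0 : 0 < t by rewrite divr_gt0.
have c_gt0 : 0 < c by rewrite ltr_wpDr // invr_ge0 ltW.
have eta_gt0 : 0 < eta by rewrite divr_gt0 // mulr_gt0.
have [K recur] := unitary_recurrence (wfM (Some b)) eta_gt0.
pose Q : RR := 4 ^+ K; pose del := eps / (3 * (1 + 2 * c * Q)).
have Q_ge1 : 1 <= Q by rewrite exprn_ege1 // ler1n.
have del_gt0 : 0 < del by rewrite divr_gt0 // mulr_gt0 //; nra.
have [w Ww w_min] := almost_minimal_extension (P := W) (phi := fun x => normsq (psi x))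
  del_gt0 isT over_ab_cat (fun x => normsq_ge0 _).
set u := psi (w ++ [:: a]).
have [d /andP[d_gt0 dK] recur_d] := recur u (normsq_psi_le1 wfM _).
have dist : normsq (psi (w ++ a :: nseq d b) - u) <= 2 * Q * del + 2 * eta.
  have := drift_almost_minimal w_min d; rewrite -/u; set Ud := iter d _ u => drift.
  have drift_le : 4 ^+ d * del <= Q * del by rewrite ler_wpM2r ?(ltW del_gt0) // ler_eXn2l // ltr1n.
  have -> : psi (w ++ a :: nseq d b) - u = (psi (w ++ a :: nseq d b) - Ud) + (Ud - u).
    by rewrite addrA subrK.
  apply: le_trans (normsqD_le _ _ ltr01) _; rewrite invr1 [normsq (Ud - u)]normsqBC.
  by have := ltW recur_d; lra.
exists w, d; split=> //; rewrite -cats1.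
have := accept_prob_le wfM (w ++ [:: a]) (w ++ a :: nseq d b) t_gt0; rewrite -/c -/u normsqBC.
have /andP[acc0_lo acc0_hi] := acc_almost_minimal w_min (over_ab_tail 0).
have /andP[accd_lo accd_hi] := acc_almost_minimal w_min (over_ab_tail d).
have : c * normsq (psi (w ++ a :: nseq d b) - u) <= c * (2 * Q * del + 2 * eta).
  by rewrite ler_wpM2l // ltW.
(* Each of the error terms del (1 + 2 c Q), t and 2 c eta equals eps/3. *)
have del_eq : del * (1 + 2 * c * Q) = eps / 3 by rewrite /del; field; nra.
have eta_eq : 2 * c * eta = eps / 3 by rewrite /eta; field; rewrite gt_eqF.
rewrite /t; nra.
Qed.

Lemma not_accepts_bounded_ab (L : language S) :
  (forall w, W w -> L (rcons w a)) ->
  (forall w d, W w -> (0 < d)%N -> ~ L (w ++ a :: nseq d b)) ->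
  ~ accepts_bounded M L.
Proof.
move=> L_in L_out [lam [eps [eps_gt0 sep]]].
have [w [d [Ww d_gt0 close]]] := accept_prob_ab_indistinguishable eps_gt0.
have [/(_ (L_in w Ww)) hi _] := sep (rcons w a).
have [_ /(_ (L_out w d Ww d_gt0)) lo] := sep (w ++ a :: nseq d b).
lra.
Qed.

End AlmostUnitaryTail.

(* The letters a, b, c are encoded as [Some true], [Some false], [None]. *)
Local Notation abc := (option bool).

(* The automaton of {a,b}^* c: state 0 reads {a,b}^*, state 1 has just read c,
   state 2 is a sink. *)
Definition scan (k : nat) (s : abc) : nat :=
  match k, s with 0%N, Some _ => 0 | 0%N, None => 1 | _, _ => 2 end.

Definition L_abc : language abc := fun x => foldl scan 0%N x = 1%N.

Definition c_to_a (x : seq abc) : seq abc :=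
  map (fun s => if s is None then Some true else s) x.

Local Notation over_ab := (all (fun s => s \in [:: Some true; Some false])).

Definition qab : 'I_4 := @Ordinal 4 0 isT.
Definition qc : 'I_4 := @Ordinal 4 1 isT.
Definition qacc : 'I_4 := @Ordinal 4 2 isT.
Definition qrej : 'I_4 := @Ordinal 4 3 isT.

Definition kind_abc (q : 'I_4) : qkind :=
  match val q with 2 => Qacc | 3 => Qrej | _ => Qnon end.

Definition trans_abc (s : option abc) : {perm 'I_4} :=
  match s with
  | Some (Some _) => tperm qc qrej
  | Some None => tperm qc qrej * tperm qab qc
  | None => tperm qab qrej * tperm qc qacc
  end.

Definition M_abc : mmqfa abc := @MMQFA _ 4 (fun s => perm_mx (trans_abc s)^-1) qab kind_abc.

Lemma trans_abc_qab s :
  trans_abc s qab = match s with Some (Some _) => qab | Some None => qc | None => qrej end.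
Proof. by case: s => [[[]|]|]; rewrite /= ?permM /tperm !permE. Qed.

Lemma trans_abc_qc s : trans_abc s qc = if s is None then qacc else qrej.
Proof. by case: s => [[[]|]|]; rewrite /= ?permM /tperm !permE. Qed.

Lemma U_abc_init_vec s q : mm_U M_abc s *m init_vec q = init_vec (trans_abc s q).
Proof. exact: perm_mxV_init_vec. Qed.

Definition config_abc (k : nat) : 'cV[CC]_4 * RR * RR :=
  match k with 0%N => (init_vec qab, 0, 0) | 1%N => (init_vec qc, 0, 0) | _ => (0, 0, 1) end.

Lemma mm_config_abc x : mm_config M_abc x = config_abc (foldl scan 0%N x).
Proof.
elim/last_ind: x => [//|x s IH].
rewrite mm_config_rcons IH foldl_rcons.
case: (foldl scan 0%N x) => [|[|k]].
- rewrite (mm_step_init_vec _ _ (U_abc_init_vec _ _)) trans_abc_qab.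
  by case: s => [[]|].
- rewrite (mm_step_init_vec _ _ (U_abc_init_vec _ _)) trans_abc_qc /= add0r.
  by case: s => [[]|].
- by rewrite mm_step0; case: k => [|k]; case: s => [[]|].
Qed.

Lemma accept_prob_abc x : accept_prob M_abc x = (foldl scan 0%N x == 1%N)%:R.
Proof.
rewrite /accept_prob foldl_rcons -/(mm_config M_abc x) mm_config_abc.
case: (foldl scan 0%N x) => [|[|k]].
- by rewrite (mm_step_init_vec _ _ (U_abc_init_vec _ _)) trans_abc_qab.
- by rewrite (mm_step_init_vec _ _ (U_abc_init_vec _ _)) trans_abc_qc /= add0r.
- by rewrite mm_step0.
Qed.

Lemma RMM_abc : RMM L_abc.
Proof.
exists M_abc; split; first by move=> s; exact: perm_mx_unitary.
exists (1 / 2), (1 / 4); split=> [|x]; first lra.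
rewrite accept_prob_abc /L_abc; split=> [->|/eqP/negbTE->] /=; lra.
Qed.

Lemma scan_ab w : over_ab w -> foldl scan 0%N w = 0%N.
Proof. by elim: w => //= s w IH /andP[]; rewrite !inE => /orP[]/eqP-> /IH. Qed.

Lemma c_to_a_ab w : over_ab w -> c_to_a w = w.
Proof. by elim: w => //= s w IH /andP[]; rewrite !inE => /orP[]/eqP-> /IH->. Qed.

Lemma L_abc_last x : L_abc x -> last (Some true) x = None.
Proof.
case/lastP: x => [//|x s]; rewrite /L_abc foldl_rcons last_rcons.
by case: s => // s; case: foldl => [|[]].
Qed.

Lemma image_abc_last y : lang_image c_to_a L_abc y -> last (Some true) y = Some true.
Proof. by case=> x /L_abc_last x_c ->; rewrite /c_to_a (last_map _ x (Some true)) x_c. Qed.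

Theorem theorem4p2 :
  exists (S : finType) (L : language S) (h : seq S -> seq S),
    @monoid_hom S h /\ @RMM S L /\ ~ @RMM S (@lang_image S h L).
Proof.
exists abc, L_abc, c_to_a; split; first by split=> // u v; rewrite /c_to_a map_cat.
split; first exact: RMM_abc.
case=> M [wfM bounded].
apply: (not_accepts_bounded_ab wfM (a := Some true) (b := Some false) _ _ bounded).
- move=> w ab_w; exists (rcons w None); first by rewrite /L_abc foldl_rcons scan_ab.
  by rewrite /c_to_a map_rcons -/(c_to_a w) c_to_a_ab.
- move=> w d _ d_gt0 /image_abc_last.
  by rewrite -(prednK d_gt0) -addn1 nseqD cats1 -rcons_cons -rcons_cat last_rcons.
Qed.
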